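(* Let $\theta\in[0,\frac\pi2]$ and let $\Omega_\theta\subset\mathbb{R}^2$ be a simply connected open set on which $\cos\theta\cosh u+\sin\theta\cos v\neq0$ (e.g. $\Omega_\theta=\mathbb{R}^2$ for $\theta\in[0,\frac\pi4)$). Define on $\Omega_\theta$, with $z=u+iv$, $$h(z)=e^{iz},\quad \mathcal{M}_\theta=\cos\theta\,\sinh u\sin u-\sin\theta\,\cos u\cos v,\quad \mathcal{N}_\theta=e^{v}\left(\cos\theta\cosh u+\sin\theta\sin v\right).$$ Then: (i) $(h,\mathcal{M}_\theta,\mathcal{N}_\theta)$ is a Weierstrass data of the second kind on $\Omega_\theta$; (ii) the map $\mathbf{X}_\theta:=\cos\theta\,\mathbf{X}_0+\sin\theta\,\mathbf{X}_{\pi/2}$, where $$\mathbf{X}_0(u,v)=(\sinh u\sin u,\ \sinh u\cos u,\ \cosh u\sinh v,\ \cosh u\cosh v)^T,\quad \mathbf{X}_{\pi/2}(u,v)=(-\cos u\cos v,\ \sin u\cos v,\ \cosh v\sin v,\ \sinh v\sin v)^T,$$ satisfies $(\mathbf{X}_\theta)_z=(\mathcal{M}_\theta)_z(1,-i,-h,h)^T+(\mathcal{N}_\theta)_z\big(0,ih,\tfrac12(1+h^2),\tfrac12(1-h^2)\big)^T$, and is a conformal spacelike immersion of $\Omega_\theta$ into $\mathbb{L}^4$ with induced metric $(\cos\theta\cosh u+\sin\theta\cos v)^2(du^2+dv^2)$; (iii) the mean curvature vector of $\mathbf{X}_\theta$ is null and vanishes nowhere on $\Omega_\theta$; (iv)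 $\mathbf{X}_\theta(\Omega_\theta)$ lies in the hypersurface $x_1^2+x_2^2+x_3^2-x_4^2=-\cos(2\theta)$.
   Context: $z=u+iv$, $\partial_z=\frac12(\partial_u-i\partial_v)$, $\partial_{\overline z}=\frac12(\partial_u+i\partial_v)$. $\mathbb{L}^4$ is $\mathbb{R}^4$ with the Lorentzian metric $\langle x,y\rangle=x_1y_1+x_2y_2+x_3y_3-x_4y_4$. For a conformal spacelike immersion $\mathbf{X}$ with induced metric $\Lambda(du^2+dv^2)$, the mean curvature vector is $\mathbf{H}=\frac{1}{\Lambda}(\mathbf{X}_{uu}+\mathbf{X}_{vv})$. A Weierstrass data of the second kind on $\Omega$ is a triple $(h,\mathcal{M},\mathcal{N})$ where $h:\Omega\to\mathbb{C}\setminus\{0\}$ and $\mathcal{M},\mathcal{N}:\Omega\to\mathbb{R}$ are $\mathcal{C}^2$, satisfying $h_{\overline z}=0$, $\mathcal{M}_{z\overline z}=(\mathrm{Re}\,h)\,\mathcal{N}_{z\overline z}$, and $\mathcal{M}_z-(\mathrm{Re}\,h)\,\mathcal{N}_z\neq0$ at every point of $\Omega$. *)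

From Stdlib Require Import Reals.
From Coquelicot Require Export Coquelicot.
Open Scope R_scope.

Definition Pu (f : R -> R -> R) (u v : R) : R := Derive (fun t => f t v) u.
Definition Pv (f : R -> R -> R) (u v : R) : R := Derive (fun t => f u t) v.

Definition cont2 (f : R -> R -> R) (u v : R) : Prop :=
  continuous (fun p : R * R => f (fst p) (snd p)) (u, v).

Definition C1_on (Om : R * R -> Prop) (f : R -> R -> R) : Prop :=
  forall u v, Om (u, v) ->
    ex_derive (fun t => f t v) u /\ ex_derive (fun t => f u t) v /\
    cont2 f u v /\ cont2 (Pu f) u v /\ cont2 (Pv f) u v.

Definition C2_on (Om : R * R -> Prop) (f : R -> R -> R) : Prop :=
  C1_on Om f /\ C1_on Om (Pu f) /\ C1_on Om (Pv f).

Definition C2_on_C (Om : R * R -> Prop) (f : R -> R -> C) : Prop :=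
  C2_on Om (fun a b => Re (f a b)) /\ C2_on Om (fun a b => Im (f a b)).

Definition liftR (f : R -> R -> R) : R -> R -> C := fun u v => RtoC (f u v).

Definition CDu (f : R -> R -> C) (u v : R) : C :=
  (Pu (fun a b => Re (f a b)) u v, Pu (fun a b => Im (f a b)) u v).
Definition CDv (f : R -> R -> C) (u v : R) : C :=
  (Pv (fun a b => Re (f a b)) u v, Pv (fun a b => Im (f a b)) u v).

Definition Dz (f : R -> R -> C) (u v : R) : C :=
  (/ 2 * (CDu f u v - Ci * CDv f u v))%C.
Definition Dzb (f : R -> R -> C) (u v : R) : C :=
  (/ 2 * (CDu f u v + Ci * CDv f u v))%C.

(** * Simply connected open sets of R^2.
    Paths / homotopies are maps continuous at every point of [0,1] (resp. [0,1]^2);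
    by clamping, this is equivalent to continuity of the restriction. *)
Definition simply_connected (Om : R * R -> Prop) : Prop :=
  (forall p q, Om p -> Om q ->
     exists g : R -> R * R, g 0 = p /\ g 1 = q /\
       (forall t, 0 <= t <= 1 -> continuous g t /\ Om (g t))) /\
  (forall g : R -> R * R, g 0 = g 1 ->
     (forall t, 0 <= t <= 1 -> continuous g t /\ Om (g t)) ->
     exists H : R * R -> R * R,
       (forall s t, 0 <= s <= 1 -> 0 <= t <= 1 -> continuous H (s, t) /\ Om (H (s, t))) /\
       (forall t, 0 <= t <= 1 -> H (0, t) = g t /\ H (1, t) = g 0) /\
       (forall s, 0 <= s <= 1 -> H (s, 0) = g 0 /\ H (s, 1) = g 0)).

Definition weierstrass_data_2 (Om : R * R -> Prop) (h : R -> R -> C)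
    (M N : R -> R -> R) : Prop :=
  C2_on_C Om h /\ C2_on Om M /\ C2_on Om N /\
  forall u v, Om (u, v) ->
    h u v <> RtoC 0 /\
    Dzb h u v = RtoC 0 /\
    Dz (Dzb (liftR M)) u v = (RtoC (Re (h u v)) * Dz (Dzb (liftR N)) u v)%C /\
    (Dz (liftR M) u v - RtoC (Re (h u v)) * Dz (liftR N) u v)%C <> RtoC 0.

(** * Lorentz–Minkowski space L^4: vectors are component maps nat -> R,
      components 0,1,2,3 standing for x1,x2,x3,x4. *)
Definition lor (a b : nat -> R) : R :=
  a 0%nat * b 0%nat + a 1%nat * b 1%nat + a 2%nat * b 2%nat - a 3%nat * b 3%nat.

Definition Xu (X : nat -> R -> R -> R) (u v : R) : nat -> R := fun i => Pu (X i) u v.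
Definition Xv (X : nat -> R -> R -> R) (u v : R) : nat -> R := fun i => Pv (X i) u v.

Definition conformal_spacelike_immersion (Om : R * R -> Prop)
    (X : nat -> R -> R -> R) (Lam : R -> R -> R) : Prop :=
  (forall i, (i < 4)%nat -> C2_on Om (X i)) /\
  forall u v, Om (u, v) ->
    0 < Lam u v /\
    lor (Xu X u v) (Xu X u v) = Lam u v /\
    lor (Xv X u v) (Xv X u v) = Lam u v /\
    lor (Xu X u v) (Xv X u v) = 0.

Definition mean_curv (X : nat -> R -> R -> R) (Lam : R -> R -> R) (u v : R) : nat -> R :=
  fun i => / Lam u v * (Pu (Pu (X i)) u v + Pv (Pv (X i)) u v).

(** h(z) = e^{iz} = e^{-v} (cos u + i sin u), z = u + iv *)
Definition hfun (u v : R) : C := (exp (- v) * cos u, exp (- v) * sin u).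

Definition Mth (th u v : R) : R :=
  cos th * sinh u * sin u - sin th * cos u * cos v.
Definition Nth (th u v : R) : R :=
  exp v * (cos th * cosh u + sin th * sin v).

Definition X0 (i : nat) (u v : R) : R :=
  match i with
  | 0%nat => sinh u * sin u
  | 1%nat => sinh u * cos u
  | 2%nat => cosh u * sinh v
  | _ => cosh u * cosh v
  end.
Definition Xpi2 (i : nat) (u v : R) : R :=
  match i with
  | 0%nat => - cos u * cos v
  | 1%nat => sin u * cos v
  | 2%nat => cosh v * sin v
  | _ => sinh v * sin v
  end.
Definition Xth (th : R) (i : nat) (u v : R) : R :=
  cos th * X0 i u v + sin th * Xpi2 i u v.

Definition Ecoef (h : C) (i : nat) : C :=
  match i with
  | 0%nat => RtoC 1
  | 1%nat => (- Ci)%C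
  | 2%nat => (- h)%C
  | _ => h
  end.
Definition Fcoef (h : C) (i : nat) : C :=
  match i with
  | 0%nat => RtoC 0
  | 1%nat => (Ci * h)%C
  | 2%nat => (/ 2 * (1 + h * h))%C
  | _ => (/ 2 * (1 - h * h))%C
  end.

Definition Lam_th (th u v : R) : R := (cos th * cosh u + sin th * cos v) ^ 2.

From Stdlib Require Import Reals Lra Lia FunctionalExtensionality.
From Coquelicot Require Import Coquelicot.
Open Scope R_scope.

(* With L = cos th cosh u + sin th cos v, everything is read off in the Lorentz
   orthonormal frame f1 = (sin u, cos u, 0, 0), f2 = (cos u, -sin u, 0, 0),
   g1 = (0, 0, cosh v, sinh v), g2 = (0, 0, sinh v, cosh v) and the null vector
   n = f2 + g2:  X_u = L f1 + cos th sinh u n,  X_v = L g1 + sin th sin v n  and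
   X_uu + X_vv = 2 L n.  Hence X is conformal with factor L^2 and its mean curvature
   vector (2 / L) n is null and nonzero; likewise X = cos th (sinh u f1 + cosh u g2)
   + sin th (sin v g1 - cos v f2) has Lorentz norm sin^2 th - cos^2 th.  For the
   Weierstrass data, Delta M = 2 L cos u = Re h * Delta N and
   M_z - Re h N_z = (L / 2) (sin u + i cos u) never vanishes.  Regularity comes from
   the algebra generated by sin, cos and exp(+-t) in either variable, which is closed
   under partial derivatives; Schwarz's theorem kills the mixed part of d_z d_zbar. *)

Lemma sin_cos_sqr x : sin x ^ 2 + cos x ^ 2 = 1.
Proof. rewrite <- (sin2_cos2 x). unfold Rsqr. ring. Qed.

Lemma cosh_sinh_sqr x : cosh x ^ 2 - sinh x ^ 2 = 1.
Proof. unfold cosh, sinh. rewrite exp_Ropp. field. apply exp_neq_0. Qed.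

Lemma cosh_pos x : 0 < cosh x.
Proof. unfold cosh. generalize (exp_pos x) (exp_pos (- x)). lra. Qed.

Lemma sin_cos_not_both_zero x : ~ (sin x = 0 /\ cos x = 0).
Proof. intros [Hs Hc]. generalize (sin_cos_sqr x). rewrite Hs, Hc. simpl. lra. Qed.

Lemma eq_mod_sin_cos x a b q :
  a - b = q * (sin x ^ 2 + cos x ^ 2 - 1) -> a = b.
Proof. rewrite sin_cos_sqr. intro H. lra. Qed.

Inductive trigexp : (R -> R -> R) -> Prop :=
| trigexp_const k : trigexp (fun _ _ => k)
| trigexp_sin : trigexp (fun u _ => sin u)
| trigexp_cos : trigexp (fun u _ => cos u)
| trigexp_exp : trigexp (fun u _ => exp u)
| trigexp_expN : trigexp (fun u _ => exp (- u))
| trigexp_swap F : trigexp F -> trigexp (fun u v => F v u)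
| trigexp_add F G : trigexp F -> trigexp G -> trigexp (fun u v => F u v + G u v)
| trigexp_mul F G : trigexp F -> trigexp G -> trigexp (fun u v => F u v * G u v).

Lemma trigexp_ext F G : trigexp F -> (forall u v, F u v = G u v) -> trigexp G.
Proof.
  intros HF E. replace G with F; [exact HF|].
  do 2 (apply functional_extensionality; intro). apply E.
Qed.

Lemma trigexp_opp F : trigexp F -> trigexp (fun u v => - F u v).
Proof.
  intro HF. apply (trigexp_ext (fun u v => -1 * F u v)).
  - apply trigexp_mul; [apply trigexp_const | exact HF].
  - intros; ring.
Qed.

Lemma trigexp_sub F G : trigexp F -> trigexp G -> trigexp (fun u v => F u v - G u v).
Proof. intros HF HG. apply (trigexp_add _ _ HF (trigexp_opp _ HG)). Qed.

Lemma trigexp_sinh : trigexp (fun u _ => sinh u).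
Proof.
  apply (trigexp_ext (fun u v => exp u * / 2 - exp (- u) * / 2)).
  - apply trigexp_sub; apply trigexp_mul; constructor.
  - intros; unfold sinh; field.
Qed.

Lemma trigexp_cosh : trigexp (fun u _ => cosh u).
Proof.
  apply (trigexp_ext (fun u v => exp u * / 2 + exp (- u) * / 2)).
  - apply trigexp_add; apply trigexp_mul; constructor.
  - intros; unfold cosh; field.
Qed.

Ltac trigexp_atom :=
  first [ apply trigexp_sin | apply trigexp_cos | apply trigexp_exp | apply trigexp_expN
        | apply trigexp_sinh | apply trigexp_cosh ].

Ltac solve_trigexp :=
  repeat first
    [ apply trigexp_sub | apply trigexp_add | apply trigexp_mul | apply trigexp_opp
    | apply trigexp_const | trigexp_atom | apply trigexp_swap; trigexp_atom ].

Lemma Pu_of_is_derive F G :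
  (forall u v, is_derive (fun t => F t v) u (G u v)) -> Pu F = G.
Proof.
  intro H. do 2 (apply functional_extensionality; intro).
  apply is_derive_unique, H.
Qed.

Lemma Pv_of_is_derive F G :
  (forall u v, is_derive (fun t => F u t) v (G u v)) -> Pv F = G.
Proof.
  intro H. do 2 (apply functional_extensionality; intro).
  apply is_derive_unique, H.
Qed.

Lemma trigexp_partials F : trigexp F ->
  (exists G, trigexp G /\ forall u v, is_derive (fun t => F t v) u (G u v)) /\
  (exists G, trigexp G /\ forall u v, is_derive (fun t => F u t) v (G u v)).
Proof.
  induction 1 as [k| | | | |F _ [[Gu [HGu Du]] [Gv [HGv Dv]]]
                 |F G HF [[Fu [HFu DFu]] [Fv [HFv DFv]]] HG [[Gu [HGu DGu]] [Gv [HGv DGv]]]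
                 |F G HF [[Fu [HFu DFu]] [Fv [HFv DFv]]] HG [[Gu [HGu DGu]] [Gv [HGv DGv]]]].
  1-5: split; [| exists (fun _ _ => 0); split;
                 [apply trigexp_const | intros; auto_derive; auto]].
  - exists (fun _ _ => 0). split; [apply trigexp_const | intros; auto_derive; auto].
  - exists (fun u _ => cos u). split; [solve_trigexp | intros; auto_derive; auto; ring].
  - exists (fun u _ => - sin u). split; [solve_trigexp | intros; auto_derive; auto; ring].
  - exists (fun u _ => exp u). split; [solve_trigexp | intros; auto_derive; auto; ring].
  - exists (fun u _ => - exp (- u)). split; [solve_trigexp | intros; auto_derive; auto; ring].
  - split; [exists (fun u v => Gv v u) | exists (fun u v => Gu v u)];
      split; auto using trigexp_swap.
  - split; [exists (fun u v => Fu u v + Gu u v) | exists (fun u v => Fv u v + Gv u v)];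
      split; auto using trigexp_add; intros u v.
    + apply (is_derive_plus (fun t => F t v) (fun t => G t v)); auto.
    + apply (is_derive_plus (fun t => F u t) (fun t => G u t)); auto.
  - split; [exists (fun u v => Fu u v * G u v + F u v * Gu u v)
           | exists (fun u v => Fv u v * G u v + F u v * Gv u v)];
      (split; [apply trigexp_add; apply trigexp_mul; auto | intros u v]).
    + apply (is_derive_mult (fun t => F t v) (fun t => G t v)); auto.
      intros; apply Rmult_comm.
    + apply (is_derive_mult (fun t => F u t) (fun t => G u t)); auto.
      intros; apply Rmult_comm.
Qed.

Lemma trigexp_Pu F : trigexp F -> trigexp (Pu F).
Proof.
  intro HF. destruct (trigexp_partials F HF) as [[G [HG D]] _].
  rewrite (Pu_of_is_derive F G D). exact HG.
Qed.

Lemma trigexp_Pv F : trigexp F -> trigexp (Pv F).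
Proof.
  intro HF. destruct (trigexp_partials F HF) as [_ [G [HG D]]].
  rewrite (Pv_of_is_derive F G D). exact HG.
Qed.

Lemma trigexp_ex_derive F u v : trigexp F ->
  ex_derive (fun t => F t v) u /\ ex_derive (fun t => F u t) v.
Proof.
  intro HF. destruct (trigexp_partials F HF) as [[Gu [_ Du]] [Gv [_ Dv]]].
  split; [exists (Gu u v) | exists (Gv u v)]; auto.
Qed.

Lemma continuous_fst_comp (g : R -> R) (u v : R) :
  (forall y, ex_derive g y) -> continuous (fun p : R * R => g (fst p)) (u, v).
Proof.
  intro H. apply (continuous_comp fst g); [apply continuous_fst |].
  apply (ex_derive_continuous (K := R_AbsRing) (V := R_NormedModule)), H.
Qed.

Lemma trigexp_continuous F : trigexp F -> forall u v, cont2 F u v.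
Proof.
  unfold cont2. induction 1 as [k| | | | |F _ IHF|F G _ IHF _ IHG|F G _ IHF _ IHG];
    intros u v.
  - apply continuous_const.
  - apply (continuous_fst_comp sin); intro; auto_derive; auto.
  - apply (continuous_fst_comp cos); intro; auto_derive; auto.
  - apply (continuous_fst_comp exp); intro; auto_derive; auto.
  - apply (continuous_fst_comp (fun x => exp (- x))); intro; auto_derive; auto.
  - apply (continuous_comp_2 snd fst F);
      [apply continuous_snd | apply continuous_fst | apply IHF].
  - apply (continuous_plus (fun p : R * R => F (fst p) (snd p))
                           (fun p : R * R => G (fst p) (snd p))); auto.
  - apply (continuous_mult (fun p : R * R => F (fst p) (snd p))
                           (fun p : R * R => G (fst p) (snd p))); auto.
Qed.

Lemma trigexp_C1 Om F : trigexp F -> C1_on Om F.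
Proof.
  intros HF u v _. destruct (trigexp_ex_derive F u v HF) as [Du Dv].
  repeat split; auto; apply trigexp_continuous;
    auto using trigexp_Pu, trigexp_Pv.
Qed.

Lemma trigexp_C2 Om F : trigexp F -> C2_on Om F.
Proof.
  intro HF. split; [|split]; apply trigexp_C1; auto using trigexp_Pu, trigexp_Pv.
Qed.

Lemma trigexp_Pu_Pv F u v : trigexp F -> Pu (Pv F) u v = Pv (Pu F) u v.
Proof.
  intro HF. apply Schwarz.
  - apply locally_2d_forall. intros a b.
    destruct (trigexp_ex_derive F a b HF) as [Du Dv].
    destruct (trigexp_ex_derive (Pv F) a b (trigexp_Pv F HF)) as [Dvu _].
    destruct (trigexp_ex_derive (Pu F) a b (trigexp_Pu F HF)) as [_ Duv].
    repeat split; assumption.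
  - apply continuity_2d_pt_filterlim.
    apply (trigexp_continuous (Pu (Pv F))); auto using trigexp_Pu, trigexp_Pv.
  - apply continuity_2d_pt_filterlim.
    apply (trigexp_continuous (Pv (Pu F))); auto using trigexp_Pu, trigexp_Pv.
Qed.

Definition laplacian (f : R -> R -> R) (u v : R) : R :=
  Pu (Pu f) u v + Pv (Pv f) u v.

Ltac pair_eq := apply injective_projections; simpl.

Lemma Dz_liftR f u v : Dz (liftR f) u v = (/ 2 * Pu f u v, - (/ 2 * Pv f u v)).
Proof.
  unfold Dz, CDu, CDv, liftR. unfold Pu at 2, Pv at 2. simpl. rewrite !Derive_const.
  change (Pu (fun a b => f a b)) with (Pu f). change (Pv (fun a b => f a b)) with (Pv f).
  pair_eq; field.
Qed.

Lemma Dzb_liftR f u v : Dzb (liftR f) u v = (/ 2 * Pu f u v, / 2 * Pv f u v).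
Proof.
  unfold Dzb, CDu, CDv, liftR. unfold Pu at 2, Pv at 2. simpl. rewrite !Derive_const.
  change (Pu (fun a b => f a b)) with (Pu f). change (Pv (fun a b => f a b)) with (Pv f).
  pair_eq; field.
Qed.

Lemma Pu_scal k f u v : Pu (fun a b => k * f a b) u v = k * Pu f u v.
Proof. apply Derive_scal. Qed.

Lemma Pv_scal k f u v : Pv (fun a b => k * f a b) u v = k * Pv f u v.
Proof. apply Derive_scal. Qed.

Lemma Dz_Dzb_liftR f u v : trigexp f ->
  Dz (Dzb (liftR f)) u v = RtoC (/ 4 * laplacian f u v).
Proof.
  intro Hf.
  assert (ERe : (fun a b => Re (Dzb (liftR f) a b)) = fun a b => / 2 * Pu f a b).
  { do 2 (apply functional_extensionality; intro). rewrite Dzb_liftR. reflexivity. }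
  assert (EIm : (fun a b => Im (Dzb (liftR f) a b)) = fun a b => / 2 * Pv f a b).
  { do 2 (apply functional_extensionality; intro). rewrite Dzb_liftR. reflexivity. }
  unfold Dz, CDu, CDv, laplacian. rewrite ERe, EIm, !Pu_scal, !Pv_scal.
  rewrite (trigexp_Pu_Pv f u v Hf). pair_eq; field.
Qed.

Definition conf_factor (th u v : R) : R := cos th * cosh u + sin th * cos v.

Definition lframe (u v a b c d : R) (i : nat) : R :=
  match i with
  | 0%nat => a * sin u + b * cos u
  | 1%nat => a * cos u - b * sin u
  | 2%nat => c * cosh v + d * sinh v
  | _ => c * sinh v + d * cosh v
  end.

Lemma lor_lframe u v a b c d a' b' c' d' :
  lor (lframe u v a b c d) (lframe u v a' b' c' d') = a * a' + b * b' + c * c' - d * d'.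
Proof.
  unfold lor, lframe.
  transitivity ((a * a' + b * b') * (sin u ^ 2 + cos u ^ 2)
                + (c * c' - d * d') * (cosh v ^ 2 - sinh v ^ 2)); [ring |].
  rewrite sin_cos_sqr, cosh_sinh_sqr. ring.
Qed.

Ltac solve_is_derive :=
  intros; unfold conf_factor, sinh, cosh; auto_derive; [auto | field].

Ltac eval_Derive :=
  unfold conf_factor, sinh, cosh;
  repeat (erewrite is_derive_unique; [| auto_derive; [auto | reflexivity]]).

Ltac field_exp := rewrite ?exp_Ropp; field; repeat split; apply exp_neq_0.

Lemma Pu_Mth th :
  Pu (Mth th) = fun u v => conf_factor th u v * sin u + cos th * sinh u * cos u.
Proof. apply Pu_of_is_derive. unfold Mth. solve_is_derive. Qed.

Lemma Pv_Mth th : Pv (Mth th) = fun u v => sin th * cos u * sin v.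
Proof. apply Pv_of_is_derive. unfold Mth. solve_is_derive. Qed.

Lemma Pu_Nth th : Pu (Nth th) = fun u v => exp v * (cos th * sinh u).
Proof. apply Pu_of_is_derive. unfold Nth. solve_is_derive. Qed.

Lemma Pv_Nth th :
  Pv (Nth th) = fun u v => exp v * (conf_factor th u v + sin th * sin v).
Proof. apply Pv_of_is_derive. unfold Nth. solve_is_derive. Qed.

Lemma laplacian_Mth th u v : laplacian (Mth th) u v = 2 * cos u * conf_factor th u v.
Proof. unfold laplacian. rewrite Pu_Mth, Pv_Mth. unfold Pu, Pv. eval_Derive. field. Qed.

Lemma laplacian_Nth th u v : laplacian (Nth th) u v = 2 * exp v * conf_factor th u v.
Proof. unfold laplacian. rewrite Pu_Nth, Pv_Nth. unfold Pu, Pv. eval_Derive. field. Qed.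

Lemma Dzb_hfun u v : Dzb hfun u v = RtoC 0.
Proof. unfold Dzb, CDu, CDv, Pu, Pv, hfun. simpl. eval_Derive. pair_eq; ring. Qed.

Lemma hfun_neq0 u v : hfun u v <> RtoC 0.
Proof.
  intro H. apply (sin_cos_not_both_zero u).
  assert (Hre := f_equal fst H). assert (Him := f_equal snd H). simpl in Hre, Him.
  generalize (exp_pos (- v)). split; nra.
Qed.

Lemma Xth_lframe th i u v :
  Xth th i u v = lframe u v (cos th * sinh u) (- sin th * cos v) (sin th * sin v)
                           (cos th * cosh u) i.
Proof. unfold Xth, X0, Xpi2, lframe. destruct i as [|[|[|i]]]; ring. Qed.

Lemma Pu_Xth th i : Pu (Xth th i) = fun u v =>
  lframe u v (conf_factor th u v) (cos th * sinh u) 0 (cos th * sinh u) i.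
Proof.
  apply Pu_of_is_derive. unfold Xth, X0, Xpi2, lframe.
  destruct i as [|[|[|i]]]; solve_is_derive.
Qed.

Lemma Pv_Xth th i : Pv (Xth th i) = fun u v =>
  lframe u v 0 (sin th * sin v) (conf_factor th u v) (sin th * sin v) i.
Proof.
  apply Pv_of_is_derive. unfold Xth, X0, Xpi2, lframe.
  destruct i as [|[|[|i]]]; solve_is_derive.
Qed.

Lemma laplacian_Xth th i u v : laplacian (Xth th i) u v =
  lframe u v 0 (2 * conf_factor th u v) 0 (2 * conf_factor th u v) i.
Proof.
  unfold laplacian. rewrite Pu_Xth, Pv_Xth. unfold Pu, Pv, lframe.
  destruct i as [|[|[|i]]]; eval_Derive; field.
Qed.

Lemma Dz_Xth th i u v :
  Dz (liftR (Xth th i)) u v =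
    (Dz (liftR (Mth th)) u v * Ecoef (hfun u v) i
     + Dz (liftR (Nth th)) u v * Fcoef (hfun u v) i)%C.
Proof.
  rewrite !Dz_liftR, Pu_Xth, Pv_Xth, Pu_Mth, Pv_Mth, Pu_Nth, Pv_Nth.
  unfold lframe, Ecoef, Fcoef, hfun.
  set (L := conf_factor th u v).
  (* Components 2 and 3 hold only modulo |e^(iu)| = 1; qre and qim are the cofactors. *)
  set (qre := exp (- v) / 4 * (cos th * sinh u)).
  set (qim := exp (- v) / 4 * (L - sin th * sin v)).
  destruct i as [|[|[|i]]]; pair_eq;
    [ | | | | apply (eq_mod_sin_cos u) with qre | apply (eq_mod_sin_cos u) with qim
    | apply (eq_mod_sin_cos u) with (- qre) | apply (eq_mod_sin_cos u) with (- qim)];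
    unfold qre, qim, sinh, cosh; field_exp.
Qed.

Lemma Dz_Mth_sub_Reh_Dz_Nth th u v :
  (Dz (liftR (Mth th)) u v - RtoC (Re (hfun u v)) * Dz (liftR (Nth th)) u v)%C =
  (/ 2 * conf_factor th u v * sin u, / 2 * conf_factor th u v * cos u).
Proof.
  rewrite !Dz_liftR, Pu_Mth, Pv_Mth, Pu_Nth, Pv_Nth. unfold hfun, conf_factor.
  pair_eq; unfold sinh, cosh; field_exp.
Qed.

Lemma weierstrass_data_2_hfun th Om :
  (forall u v, Om (u, v) -> conf_factor th u v <> 0) ->
  weierstrass_data_2 Om hfun (Mth th) (Nth th).
Proof.
  intro HL. split; [|split; [|split]].
  - split; apply trigexp_C2; unfold hfun; simpl; solve_trigexp.
  - apply trigexp_C2; unfold Mth; solve_trigexp.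
  - apply trigexp_C2; unfold Nth; solve_trigexp.
  - intros u v Huv. split; [apply hfun_neq0 | split; [apply Dzb_hfun | split]].
    + rewrite !Dz_Dzb_liftR by (unfold Mth, Nth; solve_trigexp).
      rewrite laplacian_Mth, laplacian_Nth. unfold hfun. simpl.
      pair_eq; field_exp.
    + rewrite Dz_Mth_sub_Reh_Dz_Nth. intro H. apply (sin_cos_not_both_zero u).
      assert (Hre := f_equal fst H). assert (Him := f_equal snd H). simpl in Hre, Him.
      specialize (HL u v Huv). split; nra.
Qed.

Lemma Xu_Xth th u v : Xu (Xth th) u v =
  lframe u v (conf_factor th u v) (cos th * sinh u) 0 (cos th * sinh u).
Proof. apply functional_extensionality. intro i. unfold Xu. rewrite Pu_Xth. reflexivity. Qed.

Lemma Xv_Xth th u v : Xv (Xth th) u v =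
  lframe u v 0 (sin th * sin v) (conf_factor th u v) (sin th * sin v).
Proof. apply functional_extensionality. intro i. unfold Xv. rewrite Pv_Xth. reflexivity. Qed.

Lemma conformal_spacelike_immersion_Xth th Om :
  (forall u v, Om (u, v) -> conf_factor th u v <> 0) ->
  conformal_spacelike_immersion Om (Xth th) (Lam_th th).
Proof.
  intro HL. split.
  - intros i _. apply trigexp_C2. unfold Xth, X0, Xpi2.
    destruct i as [|[|[|i]]]; solve_trigexp.
  - intros u v Huv. specialize (HL u v Huv).
    rewrite Xu_Xth, Xv_Xth, !lor_lframe. unfold Lam_th. fold (conf_factor th u v).
    repeat split; try ring.
    rewrite <- Rsqr_pow2. apply Rsqr_pos_lt, HL.
Qed.

Lemma mean_curv_Xth th u v : conf_factor th u v <> 0 ->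
  mean_curv (Xth th) (Lam_th th) u v =
  lframe u v 0 (2 / conf_factor th u v) 0 (2 / conf_factor th u v).
Proof.
  intro HL. apply functional_extensionality. intro i. unfold mean_curv.
  fold (laplacian (Xth th i) u v). rewrite laplacian_Xth.
  unfold Lam_th. fold (conf_factor th u v).
  destruct i as [|[|[|i]]]; simpl; field; exact HL.
Qed.

Lemma mean_curv_Xth_null th u v : conf_factor th u v <> 0 ->
  lor (mean_curv (Xth th) (Lam_th th) u v) (mean_curv (Xth th) (Lam_th th) u v) = 0 /\
  mean_curv (Xth th) (Lam_th th) u v 3%nat <> 0.
Proof.
  intro HL. rewrite mean_curv_Xth, lor_lframe by exact HL. split; [ring |]. simpl.
  rewrite Rmult_0_l, Rplus_0_l. unfold Rdiv.
  apply Rmult_integral_contrapositive_currified.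
  - apply Rmult_integral_contrapositive_currified; [lra | apply Rinv_neq_0_compat, HL].
  - apply Rgt_not_eq, cosh_pos.
Qed.

Lemma lor_Xth th u v :
  lor (fun i => Xth th i u v) (fun i => Xth th i u v) = - cos (2 * th).
Proof.
  rewrite (functional_extensionality _ _ (fun i => Xth_lframe th i u v)), lor_lframe, cos_2a.
  transitivity (sin th ^ 2 * (sin v ^ 2 + cos v ^ 2) - cos th ^ 2 * (cosh u ^ 2 - sinh u ^ 2));
    [ring |].
  rewrite sin_cos_sqr, cosh_sinh_sqr. ring.
Qed.

Theorem mainTheorem11 (th : R) (Om : R * R -> Prop) :
  0 <= th <= PI / 2 ->
  open Om ->
  simply_connected Om ->
  (forall u v, Om (u, v) -> cos th * cosh u + sin th * cos v <> 0) ->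
  (* (i) *)
  weierstrass_data_2 Om hfun (Mth th) (Nth th) /\
  (* (ii) *)
  (forall u v, Om (u, v) -> forall i, (i < 4)%nat ->
     Dz (liftR (Xth th i)) u v =
       (Dz (liftR (Mth th)) u v * Ecoef (hfun u v) i
        + Dz (liftR (Nth th)) u v * Fcoef (hfun u v) i)%C) /\
  conformal_spacelike_immersion Om (Xth th) (Lam_th th) /\
  (* (iii) *)
  (forall u v, Om (u, v) ->
     lor (mean_curv (Xth th) (Lam_th th) u v) (mean_curv (Xth th) (Lam_th th) u v) = 0 /\
     exists i, (i < 4)%nat /\ mean_curv (Xth th) (Lam_th th) u v i <> 0) /\
  (* (iv) *)
  (forall u v, Om (u, v) ->
     lor (fun i => Xth th i u v) (fun i => Xth th i u v) = - cos (2 * th)).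
Proof.
  intros _ _ _ HL.
  split; [apply weierstrass_data_2_hfun; exact HL |].
  split; [intros u v _ i _; apply Dz_Xth |].
  split; [apply conformal_spacelike_immersion_Xth; exact HL |].
  split; [| intros u v _; apply lor_Xth].
  intros u v Huv.
  destruct (mean_curv_Xth_null th u v (HL u v Huv)) as [Hnull H3].
  split; [exact Hnull | exists 3%nat; split; [lia | exact H3]].
Qed.
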